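(* (1) If $\mathbb{E}\min(Z,W)<\infty$, then $\sup_{n\in\mathbb{N}}|R_n|<\infty$ almost surely. (2) If $\mathbb{E}\min(Z,W)=\infty$, then $\sup_{n\in\mathbb{N}}|R_n|=\infty$ almost surely.
   Context: Let $Z,W,(Z_n)_{n\ge1},(W_n)_{n\ge1}$ be independent, identically distributed random variables taking values in $\mathbb{N}=\{1,2,3,\dots\}$. Define sets $T_n\subset\mathbb{Z}$ recursively by $T_n=\{n\}$ for $n\le 0$ and $T_n=\{n\}\cup T_{n-Z_n}\cup T_{n-W_n}$ for $n\ge1$. Let $\mathcal{L}_n=T_n\cap\{0,-1,-2,\dots\}$ and $R_n=\max\mathcal{L}_n$. *)

From HB Require Import structures.
From mathcomp Require Import all_boot all_order all_algebra.
From mathcomp Require Import all_classical all_reals all_analysis.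
Set Implicit Arguments. Unset Strict Implicit. Unset Printing Implicit Defensive.
Import Order.TTheory GRing.Theory Num.Theory.
Local Open Scope classical_set_scope.
Local Open Scope ring_scope.

(* Membership in T_n for a fixed outcome, given the sequences z n = Z_n(w),
   w n = W_n(w) (index n >= 1).  [inT z w n m] means m \in T_n.
   T_n = {n} for n <= 0, T_n = {n} \cup T_{n-Z_n} \cup T_{n-W_n} for n >= 1;
   the inductive predicate is the (unique, since Z_n,W_n >= 1) solution of
   this recursion. *)
Inductive inT (z w : nat -> nat) : int -> int -> Prop :=
| inT_self (n : int) : inT z w n n
| inT_Z (k : nat) (m : int) :
    inT z w ((k.+1)%:Z - (z k.+1)%:Z) m -> inT z w ((k.+1)%:Z) m
| inT_W (k : nat) (m : int) :
    inT z w ((k.+1)%:Z - (w k.+1)%:Z) m -> inT z w ((k.+1)%:Z) m.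

Definition Lset (z w : nat -> nat) (n : int) : set int :=
  [set m | inT z w n m /\ m <= 0].

Definition is_max_L (z w : nat -> nat) (n : int) (r : int) : Prop :=
  Lset z w n r /\ (forall m, Lset z w n m -> m <= r).

(* R_n = max L_n (chosen by xget; L_n is nonempty and finite, so the max exists). *)
Definition Rn (z w : nat -> nat) (n : int) : int :=
  xget 0 (is_max_L z w n).

(* The rvfam (Z, W, Z_1, W_1, Z_2, W_2, ...) indexed by nat * bool:
   (0,false) |-> Z, (0,true) |-> W, (n,false) |-> Z_n, (n,true) |-> W_n for n >= 1. *)
Definition rvfam {T : Type} (Z W : T -> nat) (Zs Ws : nat -> T -> nat)
  (i : nat * bool) : T -> nat :=
  match i with
  | (0, false) => Z
  | (0, true) => W
  | (n.+1, false) => Zs n.+1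
  | (n.+1, true) => Ws n.+1
  end.

Definition mutually_independent {d} {T : measurableType d} {R : realType}
  (P : probability T R) {I : eqType} (X : I -> T -> nat) : Prop :=
  forall (J : seq I) (A : I -> set nat), uniq J ->
    P (\bigcap_(i in [set` J]) (X i @^-1` A i)) =
    (\prod_(i <- J) P (X i @^-1` A i))%E.

From HB Require Import structures.
From mathcomp Require Import all_boot all_order all_algebra.
From mathcomp Require Import all_classical all_reals all_analysis.
From mathcomp Require Import zify ring lra.
Set Implicit Arguments. Unset Strict Implicit. Unset Printing Implicit Defensive.
Import Order.TTheory GRing.Theory Num.Theory.
Local Open Scope classical_set_scope.
Local Open Scope ring_scope.

(* From a vertex k+1 > 0, following the shorter jump min(Z_{k+1}, W_{k+1})
   reaches {0,-1,...} no lower than -B as long as every overshoot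
   min(Z_{k+1}, W_{k+1}) - (k+1) stays at most B; conversely, an overshoot
   above B at k+1 sends both children of k+1 below -B, so |R_{k+1}| > B.
   Hence sup_n |R_n| is finite iff the overshoots are bounded.

   By independence P(min(Z_k, W_k) > t) = P(Z > t)^2 = P(min(Z, W) > t), and
   E min(Z, W) is the sum of these tails.  If it is finite, Borel-Cantelli
   leaves only finitely many positive overshoots.  If it is infinite then, for
   every B, the events "overshoot above B at k+1" are independent with a
   divergent sum of probabilities p_k, and none of the first N of them occurs
   with probability prod (1 - p_k) <= 1 / (1 + sum p_k), which tends to 0. *)

Lemma int_set_max (S : set int) (b : int) :
  S !=set0 -> (forall m, S m -> m <= b) -> exists2 r, S r & forall m, S m -> m <= r.
Proof.
move=> [m0 Sm0] S_le_b.
have back m : S m -> b - `|b - m|%N%:Z = m by move=> /S_le_b; lia.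
have [|k /asboolP Sk k_min] := ex_minnP (P := fun k => `[< S (b - k%:Z) >]).
  by exists `|b - m0|%N; apply/asboolP; rewrite back.
exists (b - k%:Z) => // m Sm.
have : (k <= `|b - m|%N)%N by apply: k_min; apply/asboolP; rewrite back.
by have := S_le_b _ Sm; lia.
Qed.

Section tree_exploration.
Variables z w : nat -> nat.
Hypothesis z_gt0 : forall k, (0 < z k.+1)%N.
Hypothesis w_gt0 : forall k, (0 < w k.+1)%N.

Lemma inT_nonpos j m : j <= 0 -> inT z w j m -> m = j.
Proof. by move=> j_le0 Tm; case: Tm j_le0 => // k m' _; rewrite lez_nat. Qed.

Lemma inT_succP k m : inT z w k.+1%:Z m ->
  [\/ m = k.+1%:Z, inT z w (k.+1%:Z - (z k.+1)%:Z) m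
    | inT z w (k.+1%:Z - (w k.+1)%:Z) m].
Proof.
move En : k.+1%:Z => n Tm; case: Tm En => [_ <-|j m' + [->]|j m' + [->]].
- exact: Or31.
- exact: Or32.
- exact: Or33.
Qed.

Lemma inT_minn k m : inT z w (k.+1%:Z - (minn (z k.+1) (w k.+1))%:Z) m ->
  inT z w k.+1%:Z m.
Proof. by case: leqP => _; [exact: inT_Z | exact: inT_W]. Qed.

Lemma Lset_exists_ge (B n : nat) :
  (forall k, (k < n)%N -> (minn (z k.+1) (w k.+1) <= k.+1 + B)%N) ->
  exists2 m, Lset z w n%:Z m & - B%:Z <= m.
Proof.
elim/ltn_ind: n => -[_ _|k IH short_jumps].
  by exists 0 => //; split; [exact: inT_self|].
set s := minn (z k.+1) (w k.+1).
have s_gt0 : (0 < s)%N by rewrite leq_min z_gt0 w_gt0.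
have s_le : (s <= k.+1 + B)%N := short_jumps k (ltnSn k).
have [s_le_k|k_lt_s] := leqP s k.+1; last first.
  by exists (k.+1%:Z - s%:Z); [split; [exact/inT_minn/inT_self|lia]|lia].
have [|j j_lt|m [Tm m_le0] mB] := IH (k.+1 - s)%N; first lia.
  by apply: short_jumps; lia.
by exists m => //; split=> //; apply: inT_minn; rewrite subzn.
Qed.

Lemma Rn_is_max n : is_max_L z w n%:Z (Rn z w n%:Z).
Proof.
apply: xgetPex.
have [|m Lm _] := @Lset_exists_ge (\sum_(k < n) minn (z k.+1) (w k.+1)) n.
  by move=> k kn; rewrite (bigD1 (Ordinal kn)) //=; lia.
have [r Lr r_max] :=
  @int_set_max (Lset z w n%:Z) 0 (ex_intro _ m Lm) (fun _ => @proj2 _ _).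
by exists r.
Qed.

Lemma Rn_abs_le (B n : nat) :
  (forall k, (minn (z k.+1) (w k.+1) <= k.+1 + B)%N) -> `|Rn z w n%:Z| <= B%:Z.
Proof.
move=> short_jumps; have [[_ r_le0] r_max] := Rn_is_max n.
have [m Lm mB] := @Lset_exists_ge B n (fun k _ => short_jumps k).
by have := r_max _ Lm; lia.
Qed.

Lemma Rn_abs_gt (B k : nat) :
  (k.+1 + B < minn (z k.+1) (w k.+1))%N -> B%:Z < `|Rn z w k.+1%:Z|.
Proof.
rewrite leq_min => /andP[zB wB]; have [[Tr r_le0] _] := Rn_is_max k.+1.
have child_le0 (s : nat) : (k.+1 + B < s)%N -> k.+1%:Z - s%:Z <= 0 by lia.
case/inT_succP: Tr => [|/(inT_nonpos (child_le0 _ zB))|/(inT_nonpos (child_le0 _ wB))];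
  lia.
Qed.
End tree_exploration.

Lemma prod_1B_mul_1D_sum_le1 (R : realDomainType) (p : nat -> R) (N : nat) :
  (forall k, 0 <= p k <= 1) ->
  \prod_(k < N) (1 - p k) * (1 + \sum_(k < N) p k) <= 1.
Proof.
move=> p01; elim: N => [|N IH]; first by rewrite !big_ord0 addr0 mulr1.
rewrite !big_ord_recr /=.
set c := \prod_(k < N) _ in IH *; set S := \sum_(k < N) _ in IH *.
have c_ge0 : 0 <= c by apply: prodr_ge0 => k _; have /andP[] := p01 k; lra.
have S_ge0 : 0 <= S by apply: sumr_ge0 => k _; have /andP[] := p01 k.
have /andP[q_ge0 q_le1] := p01 N.
(* with q = p N: c (1 - q) (1 + S + q) = c (1 + S) - c q (S + q) *)
have : 0 <= c * (p N * (S + p N)) by rewrite !mulr_ge0 // addr_ge0.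
nra.
Qed.

Lemma eq0_mul_natr_le1 (R : archiFieldType) (x : R) :
  0 <= x -> (forall n, x * n%:R <= 1) -> x = 0.
Proof.
move=> x_ge0 x_small; apply/eqP; rewrite eq_le x_ge0 andbT leNgt; apply/negP => x_gt0.
have := x_small (Num.trunc x^-1).+1; apply/negP; rewrite -ltNge.
by rewrite -[X in X < _](mulfV (lt0r_neq0 x_gt0)) ltr_pM2l // truncnS_gt.
Qed.

Lemma integral_nat_tail d (T : measurableType d) (R : realType)
    (mu : {measure set T -> \bar R}) (U : T -> nat) :
  (forall k, measurable [set x | (k < U x)%N]) ->
  (\int[mu]_x ((U x)%:R : R)%:E = \sum_(k <oo) mu [set x | (k < U x)%N])%E.
Proof.
move=> mU; pose I k := \1_[set x | (k < U x)%N] : T -> R.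
have layer_cake x : (((U x)%:R : R)%:E = \sum_(k <oo) (I k x)%:E)%E.
  rewrite (@nneseries_split _ _ 0 (U x)); last by move=> k _; rewrite lee_fin /I indicE.
  rewrite eseries0 ?adde0 => [|k]; last first.
    by rewrite add0n /I indicE => Uk _; rewrite memNset //= ltnNge Uk.
  rewrite add0n sumEFin (eq_big_nat _ _ (F2 := fun _ => 1)); last first.
    by move=> k /andP[_ kU]; rewrite /I indicE mem_set.
  by rewrite big_const_nat subn0 iter_addr_0.
rewrite (eq_integral (fun x => \sum_(k <oo) (I k x)%:E)%E); last first.
  by move=> x _; exact: layer_cake.
rewrite integral_nneseries //; last 2 first.
- move=> k; apply/measurable_realfun.measurable_EFinP.
  exact: measurable_realfun.measurable_indic.
- by move=> k x _; rewrite lee_fin /I indicE.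
by apply: eq_eseriesr => k _; rewrite integral_indic // setIT.
Qed.

Section real_probability.
Context d (T : measurableType d) (R : realType) (P : probability T R).

Definition pr (A : set T) : R := fine (P A).

Lemma prE A : measurable A -> P A = (pr A)%:E.
Proof. by move=> mA; rewrite /pr fineK // fin_num_measure. Qed.

Lemma pr_ge0 A : 0 <= pr A.
Proof. by rewrite /pr fine_ge0. Qed.

Lemma pr_le1 A : measurable A -> pr A <= 1.
Proof. by move=> mA; rewrite -lee_fin -prE // probability_le1. Qed.

Lemma le_pr A B : measurable A -> measurable B -> A `<=` B -> pr A <= pr B.
Proof. by move=> mA mB AB; rewrite -lee_fin -!prE // le_measure ?inE. Qed.

Lemma prIC A B : measurable A -> measurable B ->
  pr (A `&` ~` B) = pr A - pr (A `&` B).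
Proof.
move=> mA mB; rewrite -setDE /pr measureD ?fineB ?fin_num_measure //.
  exact: measurableI.
by rewrite (le_lt_trans (probability_le1 _ mA)) // ltry.
Qed.
End real_probability.

Lemma minn_gt_setI (T : Type) (U V : T -> nat) (t : nat) :
  [set x | (t < minn (U x) (V x))%N] =
  U @^-1` [set n | (t < n)%N] `&` V @^-1` [set n | (t < n)%N].
Proof. by apply/seteqP; split => x /=; rewrite leq_min => /andP. Qed.

Section random_tree.
Context d (T : measurableType d) (R : realType) (P : probability T R)
  (Z W : T -> nat) (Zs Ws : nat -> T -> nat).
Local Notation X := (rvfam Z W Zs Ws).
Hypothesis mX : forall i, measurable_fun setT (X i).
Hypothesis indep : mutually_independent P X.
Hypothesis ident_distr : forall i A, P (X i @^-1` A) = P (Z @^-1` A).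
Hypothesis X_gt0 : forall i x, (0 < X i x)%N.

Lemma Zs_gt0 x k : (0 < Zs k.+1 x)%N. Proof. exact: (X_gt0 (k.+1, false)). Qed.
Lemma Ws_gt0 x k : (0 < Ws k.+1 x)%N. Proof. exact: (X_gt0 (k.+1, true)). Qed.

Lemma measurable_rvfam_preimage i A : measurable (X i @^-1` A).
Proof. by rewrite -[X i @^-1` A]setTI; apply: mX. Qed.

Definition cylinder (J : seq (nat * bool)) (A : nat * bool -> set nat) : set T :=
  \bigcap_(i in [set` J]) X i @^-1` A i.

Lemma cylinder_nil A : cylinder [::] A = setT.
Proof. by rewrite /cylinder set_nil bigcap_set0. Qed.

Lemma cylinder_cons a J A : cylinder (a :: J) A = X a @^-1` A a `&` cylinder J A.
Proof.
apply/seteqP; split => [x Cx|x [Xa CJ] i /=].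
  by split=> [|i Ji]; apply: Cx; rewrite /= inE ?eqxx ?Ji ?orbT.
by rewrite inE => /orP[/eqP -> //|]; exact: CJ.
Qed.

Lemma measurable_cylinder J A : measurable (cylinder J A).
Proof.
elim: J => [|a J mJ]; first by rewrite cylinder_nil.
by rewrite cylinder_cons; apply: measurableI => //; exact: measurable_rvfam_preimage.
Qed.

Lemma eq_cylinder J A A' : {in J, A =1 A'} -> cylinder J A = cylinder J A'.
Proof.
move=> AA'; apply/seteqP; split => x Cx i /= Ji; have := Cx i Ji.
  by rewrite /= AA'.
by rewrite /= AA'.
Qed.

Lemma pr_cylinder J A : uniq J ->
  pr P (cylinder J A) = \prod_(i <- J) pr P (X i @^-1` A i).
Proof.
move=> uJ; rewrite {1}/pr /cylinder indep //.
rewrite (eq_bigr (fun i => (pr P (X i @^-1` A i))%:E)) ?prodEFin // => i _.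
by rewrite prE //; exact: measurable_rvfam_preimage.
Qed.

Definition survival (t : nat) : R := pr P (Z @^-1` [set n | (t < n)%N]).

Lemma survival_ge0 t : 0 <= survival t.
Proof. exact: pr_ge0. Qed.

Lemma survival_le1 t : survival t <= 1.
Proof. by apply: pr_le1; exact: (measurable_rvfam_preimage (0, false)). Qed.

Lemma survival_sq01 t : 0 <= survival t ^+ 2 <= 1.
Proof. by rewrite exprn_ge0 ?exprn_ile1 ?survival_ge0 ?survival_le1. Qed.

Lemma measurable_minn_gt n t :
  measurable [set x | (t < minn (X (n, false) x) (X (n, true) x))%N].
Proof. by rewrite minn_gt_setI; apply: measurableI; exact: measurable_rvfam_preimage. Qed.

Lemma pr_minn_gt n t :
  pr P [set x | (t < minn (X (n, false) x) (X (n, true) x))%N] = survival t ^+ 2.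
Proof.
have uniq_pair : uniq [:: (n, false); (n, true)].
  by rewrite /= inE xpair_eqE andbF.
move: (pr_cylinder (fun=> [set m | (t < m)%N]) uniq_pair).
rewrite !cylinder_cons cylinder_nil setIT minn_gt_setI => ->.
by rewrite !big_cons big_nil mulr1 /pr !ident_distr.
Qed.

Lemma expectation_minn :
  (\int[P]_x ((minn (Z x) (W x))%:R : R)%:E = \sum_(k <oo) (survival k ^+ 2)%:E)%E.
Proof.
rewrite integral_nat_tail => [|k]; last exact: (measurable_minn_gt 0).
apply: eq_eseriesr => k _.
by rewrite -(pr_minn_gt 0) -prE //; exact: (measurable_minn_gt 0).
Qed.

Definition jump_set (B k : nat) : set T :=
  [set x | (k.+1 + B < minn (Zs k.+1 x) (Ws k.+1 x))%N].

Lemma measurable_jump_set B k : measurable (jump_set B k).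
Proof. exact: (measurable_minn_gt k.+1). Qed.

Lemma pr_jump_set B k : P (jump_set B k) = (survival (k.+1 + B) ^+ 2)%:E.
Proof. by rewrite prE ?(pr_minn_gt k.+1) //; exact: measurable_jump_set. Qed.

Lemma Rn_bounded_ae :
  (\int[P]_x ((minn (Z x) (W x))%:R : R)%:E < +oo)%E ->
  {ae P, forall x, exists B : nat, forall n : nat, (0 < n)%N ->
     `|Rn (fun k => Zs k x) (fun k => Ws k x) n%:Z| <= B%:Z}.
Proof.
rewrite expectation_minn => summable.
have limsup0 : P (lim_sup_set (jump_set 0)) = 0.
  apply: lim_sup_set_cvg0 => [k|]; first exact: measurable_jump_set.
  apply: le_lt_trans summable.
  apply: lee_nneseries => [k _ _|k _]; first exact: measure_ge0.
  apply: (@le_trans _ _ (survival (k.+1 + 0) ^+ 2)%:E); first by rewrite -pr_jump_set.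
  rewrite addn0 lee_fin lerXn2r ?nnegrE ?survival_ge0 //.
  apply: le_pr => [||x /ltnW //]; exact: (measurable_rvfam_preimage (0, false)).
exists (lim_sup_set (jump_set 0)); split => //.
  apply: bigcap_measurable => // k _; apply: bigcup_measurable => j _.
  exact: measurable_jump_set.
move=> x /= unbounded n _; apply: contrapT => no_late_jump; apply: unbounded.
exists (\sum_(j < n) minn (Zs j.+1 x) (Ws j.+1 x))%N => -[//|m] _.
apply: (Rn_abs_le (Zs_gt0 x) (Ws_gt0 x)) => k.
have [kn|nk] := ltnP k n; first by rewrite (bigD1 (Ordinal kn)) //=; lia.
have : ~ jump_set 0 k x by move=> Jk; apply: no_late_jump; exists k.
by rewrite /jump_set /= addn0 => /negP; rewrite -leqNgt; lia.
Qed.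

Fixpoint no_jump (B N : nat) : set T :=
  if N is N'.+1 then no_jump B N' `&` ~` jump_set B N' else setT.

Lemma measurable_no_jump B N : measurable (no_jump B N).
Proof.
elim: N => [|N mN] //=; apply: measurableI => //.
by apply: measurableC; exact: measurable_jump_set.
Qed.

(* Stated for cylinders beyond index N so that the induction can peel off the
   last jump: the event of that jump is itself such a cylinder. *)
Lemma pr_no_jump_cylinder B N J A : uniq J -> (forall i, i \in J -> (N < i.1)%N) ->
  pr P (no_jump B N `&` cylinder J A) =
  \prod_(k < N) (1 - survival (k.+1 + B) ^+ 2) * pr P (cylinder J A).
Proof.
elim: N J A => [|N IH] J A uJ J_gt; first by rewrite /= setTI big_ord0 mul1r.
pose G := [set n | (N.+1 + B < n)%N].
pose A' i := if i.1 == N.+1 then G else A i.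
pose J' := [:: (N.+1, false), (N.+1, true) & J].
have A'_J : {in J, A' =1 A} by move=> i /J_gt Ni; rewrite /A' gtn_eqF.
have uJ' : uniq J'.
  rewrite /= !inE xpair_eqE andbF uJ andbT /=.
  by apply/andP; split; apply/negP => /J_gt; rewrite ltnn.
have J'_gt i : i \in J' -> (N < i.1)%N.
  by rewrite !inE => /orP[/eqP -> //|/orP[/eqP -> //|/J_gt /ltnW]].
have jumpE : jump_set B N `&` cylinder J A = cylinder J' A'.
  by rewrite !cylinder_cons -(eq_cylinder A'_J) /A' /= eqxx setIA -minn_gt_setI.
have pr_J' : pr P (cylinder J' A') = survival (N.+1 + B) ^+ 2 * pr P (cylinder J A).
  have prJ : \prod_(i <- J) pr P (X i @^-1` A' i) = \prod_(i <- J) pr P (X i @^-1` A i).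
    by apply: eq_big_seq => i Ji; rewrite A'_J.
  rewrite !pr_cylinder // !big_cons prJ.
  by rewrite /A' /= eqxx /pr (ident_distr (N.+1, false)) (ident_distr (N.+1, true)) mulrA.
have mIJ : measurable (no_jump B N `&` cylinder J A).
  by apply: measurableI; [exact: measurable_no_jump|exact: measurable_cylinder].
rewrite /= setIAC prIC //; last exact: measurable_jump_set.
rewrite -setIA (setIC (cylinder J A)) jumpE (IH J' A' uJ' J'_gt) pr_J'.
rewrite (IH J A uJ (fun i Ji => ltnW (J_gt i Ji))) big_ord_recr /=.
ring.
Qed.

Lemma pr_no_jump B N : pr P (no_jump B N) = \prod_(k < N) (1 - survival (k.+1 + B) ^+ 2).
Proof.
rewrite -[no_jump B N]setIT -(cylinder_nil (fun=> setT)) pr_no_jump_cylinder //.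
by rewrite pr_cylinder // big_nil mulr1.
Qed.

Lemma survival_sq_partial_sums_unbounded B :
  (\sum_(k <oo) (survival k ^+ 2)%:E)%E = +oo%E ->
  forall n : nat, exists N, n%:R <= \sum_(k < N) survival (k.+1 + B) ^+ 2.
Proof.
move=> diverges n; apply: contrapT => bounded.
have partial_lt N : \sum_(k < N) survival (k.+1 + B) ^+ 2 < n%:R.
  by rewrite ltNge; apply/negP => le_sum; apply: bounded; exists N.
have sq_ge0 k : (0 <= (survival k ^+ 2)%:E)%E by rewrite lee_fin exprn_ge0 ?survival_ge0.
move: diverges; rewrite (@nneseries_split _ _ 0 B.+1) // add0n -nneseries_addn //.
rewrite (eq_eseriesr (g := fun k => (survival (k.+1 + B) ^+ 2)%:E)); last first.
  by move=> k _; rewrite addnS.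
have : (\sum_(k <oo) (survival (k.+1 + B) ^+ 2)%:E <= n%:R%:E)%E.
  apply: lime_le; first exact: is_cvg_nneseries.
  by apply: nearW => N; rewrite sumEFin lee_fin big_mkord ltW.
rewrite sumEFin; case: (\sum_(k <oo) _)%E => // r.
Qed.

Lemma pr_never_jump B :
  (\sum_(k <oo) (survival k ^+ 2)%:E)%E = +oo%E -> P (\bigcap_N no_jump B N) = 0.
Proof.
move=> diverges; have mnever : measurable (\bigcap_N no_jump B N).
  by apply: bigcapT_measurable => N; exact: measurable_no_jump.
rewrite prE //; congr EFin; apply: eq0_mul_natr_le1 => [|n]; first exact: pr_ge0.
have [N n_le] := survival_sq_partial_sums_unbounded B diverges n.
apply: le_trans _ (prod_1B_mul_1D_sum_le1 N (fun k => survival_sq01 (k.+1 + B))).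
apply: ler_pM => //; first exact: pr_ge0.
  rewrite -pr_no_jump; apply: le_pr => //; first exact: measurable_no_jump.
  by move=> y /(_ N I).
by rewrite (le_trans n_le) // lerDr.
Qed.

Lemma no_jump_fail B N x : ~ no_jump B N x -> exists k, jump_set B k x.
Proof.
elim: N => [|N IH] /= outside; first by exfalso; apply: outside.
have [jump|no_jumpN] := pselect (jump_set B N x); first by exists N.
by apply: IH => inside; apply: outside.
Qed.

Lemma Rn_unbounded_ae :
  (\int[P]_x ((minn (Z x) (W x))%:R : R)%:E = +oo)%E ->
  {ae P, forall x, forall B : nat, exists n : nat, (0 < n)%N /\
     B%:Z < `|Rn (fun k => Zs k x) (fun k => Ws k x) n%:Z|}.
Proof.
rewrite expectation_minn => diverges.
apply: (@negligibleS _ _ _ P (\bigcup_B \bigcap_N no_jump B N)); last first.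
  apply: negligible_bigcup => B; exists (\bigcap_N no_jump B N); split => //.
    by apply: bigcapT_measurable => N; exact: measurable_no_jump.
  exact: pr_never_jump.
move=> x /= bounded; apply: contrapT => never_stuck; apply: bounded => B.
have [N /no_jump_fail[k jump]] : exists N, ~ no_jump B N x.
  by apply: contrapT => stuck; apply: never_stuck; exists B => // N _;
    apply: contrapT => outside; apply: stuck; exists N.
exists k.+1; split => //.
exact: (Rn_abs_gt (Zs_gt0 x) (Ws_gt0 x)).
Qed.

End random_tree.

Theorem theorem4 (d : measure_display) (T : measurableType d) (R : realType)
  (P : probability T R) (Z W : T -> nat) (Zs Ws : nat -> T -> nat) :
  (forall i, measurable_fun setT (rvfam Z W Zs Ws i)) ->
  mutually_independent P (rvfam Z W Zs Ws) ->
  (forall i (A : set nat),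
     P (rvfam Z W Zs Ws i @^-1` A) = P (Z @^-1` A)) ->
  (forall i x, (0 < rvfam Z W Zs Ws i x)%N) ->
  (((\int[P]_x ((minn (Z x) (W x))%:R : R)%:E < +oo)%E ->
    {ae P, forall x, exists B : nat, forall n : nat, (0 < n)%N ->
        `|Rn (fun k => Zs k x) (fun k => Ws k x) n%:Z| <= B%:Z})
   /\
   ((\int[P]_x ((minn (Z x) (W x))%:R : R)%:E = +oo)%E ->
    {ae P, forall x, forall B : nat, exists n : nat, (0 < n)%N /\
        B%:Z < `|Rn (fun k => Zs k x) (fun k => Ws k x) n%:Z|})).
Proof.
move=> mX indep ident_distr X_gt0; split.
  exact: Rn_bounded_ae mX indep ident_distr X_gt0.
exact: Rn_unbounded_ae mX indep ident_distr X_gt0.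
Qed.
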